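(* Let $a=(a_1<\dots<a_n)$ be the sequence of a matching of size $n$ and $d(a)=\sum_i(a_i-i)$. For an indeterminate $t$, let $\Phi_a(\tau,t)$ be the coefficient of $\prod_{i=1}^n u_i^{a_i-1}$ in the formal power series $$\prod_{i=1}^n(1+\tau u_i)^t\prod_{1\le i<j\le n}(u_j-u_i)(1+\tau u_j+u_iu_j),$$ where $(1+\tau u)^t=\sum_{k\ge0}\binom{t}{k}\tau^ku^k$. Then $\Phi_a(\tau,t)$ is a polynomial in $\tau$ with coefficients in $\mathbb{Q}[t]$, of degree $d(a)$ in $\tau$, whose coefficient of $\tau^{d(a)}$ is $$D_a(t)=\det_{1\le i,j\le n}\left[\binom{t+i-1}{a_i-j}\right].$$
   Context: A matching of size $n$ is a set of $n$ disjoint noncrossing pairs partitioning $\{1,\dots,2n\}$; its sequence $a_1<\dots<a_n$ lists the smaller elements of its arches (so $a_i\le 2i-1$). $\binom{x}{k}=x(x-1)\cdots(x-k+1)/k!$ for $k\ge0$ and $0$ for $k<0$. *)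

From HB Require Import structures.
From mathcomp Require Import all_boot all_order all_algebra.
Set Implicit Arguments. Unset Strict Implicit. Unset Printing Implicit Defensive.
Import Order.TTheory GRing.Theory Num.Theory.
Local Open Scope ring_scope.

Definition is_matching (n : nat) (M : seq (nat * nat)) : bool :=
  [&& size M == n,
      all (fun p => (p.1 < p.2)%N) M,
      perm_eq (flatten [seq [:: p.1; p.2] | p <- M]) (iota 1 (2 * n)) &
      all (fun p => all (fun q =>
             ~~ [&& (p.1 < q.1)%N, (q.1 < p.2)%N & (p.2 < q.2)%N]) M) M].

Definition matching_seq (M : seq (nat * nat)) : seq nat :=
  sort leq [seq p.1 | p <- M].

(* d(a) = sum_i (a_i - i)  (1-based i; a is read 0-based via nth). *)
Definition dsum (n : nat) (a : seq nat) : nat :=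
  (\sum_(i < n) (nth 0 a i - i.+1))%N.

Definition binomP (x : {poly rat}) (k : int) : {poly rat} :=
  match k with
  | Posz k => (k`!%:R)^-1 *: \prod_(m < k) (x - (m%:R)%:P)
  | Negz _ => 0
  end.

(* D_a(t) = det [ binom(t+i-1, a_i - j) ]_{1<=i,j<=n}, written 0-based. *)
Definition Dpoly (n : nat) (a : seq nat) : {poly rat} :=
  \det (\matrix_(i < n, j < n)
          binomP ('X + ((i : nat)%:R)%:P) ((nth 0 a i)%:Z - (j : nat)%:Z - 1)).

Definition mps (R : Type) (n : nat) := ('I_n -> nat) -> R.

Section MPS.
Variables (R : comRingType) (n : nat).

Definition mps_one : mps R n :=
  fun e => if [forall k, e k == 0%N] then 1 else 0.

Definition mps_add (f g : mps R n) : mps R n := fun e => f e + g e.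

Definition mps_mul (f g : mps R n) : mps R n :=
  fun e => \sum_(d : {ffun 'I_n -> 'I_(\max_(k < n) e k).+1}
                  | [forall k, (d k <= e k)%N])
             f (fun k => nat_of_ord (d k)) * g (fun k => (e k - d k)%N).

Definition mmono (c : R) (m : 'I_n -> nat) : mps R n :=
  fun e => if [forall k, e k == m k] then c else 0.

Definition uvec (i : 'I_n) : 'I_n -> nat := fun k => nat_of_bool (k == i).

End MPS.

(* Coefficient ring Q[t][tau]:  outer variable tau, inner variable t. *)
Definition tau : {poly {poly rat}} := 'X.

(* (1 + tau u_i)^t = sum_k binom(t,k) tau^k u_i^k *)
Definition pow_factor (n : nat) (i : 'I_n) : mps {poly {poly rat}} n :=
  fun e => if [forall k, (k != i) ==> (e k == 0%N)]
           then (binomP 'X (e i))%:P * tau ^+ (e i) else 0.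

Definition pair_factor (n : nat) (i j : 'I_n) : mps {poly {poly rat}} n :=
  mps_mul
    (mps_add (mmono 1 (uvec j)) (mmono (-1) (uvec i)))
    (mps_add (mmono 1 (fun _ => 0%N))
       (mps_add (mmono tau (uvec j))
                (mmono 1 (fun k => (uvec i k + uvec j k)%N)))).

Definition Phi (n : nat) (a : seq nat) : {poly {poly rat}} :=
  mps_mul
    (\big[@mps_mul _ n/@mps_one _ n]_(i < n) pow_factor i)
    (\big[@mps_mul _ n/@mps_one _ n]_(i < n)
        \big[@mps_mul _ n/@mps_one _ n]_(j < n | (i < j)%N) pair_factor i j)
    (fun i => (nth 0 a i).-1).

From HB Require Import structures.
From mathcomp Require Import all_boot all_order all_algebra all_fingroup zify.
From mathcomp Require Import boolp.
Import Order.TTheory GRing.Theory Num.Theory.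
Local Open Scope ring_scope.
Set Implicit Arguments. Unset Strict Implicit. Unset Printing Implicit Defensive.

(* In the coefficient of u^e, every factor (1 + tau u_i)^t has tau-degree at most
   |e| and every pair factor at most |e| - 1, and the coefficients of tau^|e|
   resp. tau^(|e|-1) are those of sum_k binom(t,k) u_i^k and (u_j - u_i)(1 + u_j).
   Since taking such "top parts" is multiplicative, Phi_a has tau-degree at most
   sum_i (a_i - 1) - n(n-1)/2 = d(a), and its coefficient of tau^d(a) is the
   coefficient of prod_i u_i^(a_i - 1) in the product of the top parts. Writing
   prod_(i<j) (u_j - u_i) as a Vandermonde determinant and absorbing (1 + u_i)^i
   into the i-th binomial series by Pascal's rule, this coefficient is D_a(t).
   Finally D_a is nonzero: its coefficient of t^d(a) is det [1 / (a_i - 1 - j)!],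
   a diagonal matrix times the Vandermonde matrix of the distinct a_i times a
   unitriangular matrix. *)

(* Series are functions, so their equality is only classically decidable. *)
HB.instance Definition _ (R : comNzRingType) (n : nat) := gen_eqMixin (mps R n).
HB.instance Definition _ (R : comNzRingType) (n : nat) := gen_choiceMixin (mps R n).

Section SeriesRing.
Variables (R : comNzRingType) (n : nat).
Local Notation series := (mps R n).
Implicit Types (f g h : series) (e d : 'I_n -> nat).

(* The Cauchy product sums over exponent vectors [d <= e] coded as functions
   into ['I_N.+1]; the bound [N] is irrelevant as soon as it dominates [e]. *)
Definition boxsum N e (F : ('I_n -> nat) -> R) : R :=
  \sum_(d : {ffun 'I_n -> 'I_N.+1} | [forall k, (d k <= e k)%N])
    F (fun k => nat_of_ord (d k)).

Definition vmax e := (\max_(k < n) e k)%N.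

Lemma leq_vmax e k : (e k <= vmax e)%N.
Proof. exact: (leq_bigmax_cond (F := e)). Qed.

Lemma mps_mulE f g e :
  mps_mul f g e = boxsum (vmax e) e (fun d => f d * g (fun k => e k - d k)%N).
Proof. by []. Qed.

Lemma boxsum_widen N N' e F : (forall k, e k <= N)%N -> (N <= N')%N ->
  boxsum N' e F = boxsum N e F.
Proof.
move=> leeN leNN'; rewrite /boxsum.
pose up (D : {ffun 'I_n -> 'I_N.+1}) : {ffun 'I_n -> 'I_N'.+1} := [ffun k => inord (D k)].
pose down (D : {ffun 'I_n -> 'I_N'.+1}) : {ffun 'I_n -> 'I_N.+1} := [ffun k => inord (D k)].
have upE D k : nat_of_ord (up D k) = D k.
  by rewrite ffunE inordK // ltnS (leq_trans _ leNN') // -ltnS.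
rewrite (reindex_onto up down) /=; last first.
  move=> D /forallP leDe; apply/ffunP => k; apply/val_inj.
  by rewrite /= upE ffunE inordK // ltnS (leq_trans (leDe k)).
apply: eq_big => [D|D _]; last by congr F; apply: funext => k; rewrite upE.
apply/andP/idP => [[/forallP leDe _]|/forallP leDe].
  by apply/forallP => k; move: (leDe k); rewrite upE.
split; first by apply/forallP => k; rewrite upE.
by apply/eqP/ffunP => k; apply/val_inj; rewrite ffunE upE inord_val.
Qed.

Lemma boxsumE N e F : (forall k, e k <= N)%N -> boxsum N e F = boxsum (vmax e) e F.
Proof.
move=> leeN; rewrite -(@boxsum_widen N (maxn N (vmax e))) ?leq_maxl //.
by rewrite (@boxsum_widen (vmax e)) ?leq_maxr // => k; apply: leq_vmax.
Qed.

Lemma boxsum_shift N e c (F : ('I_n -> nat) -> R) :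
  (forall k, c k <= e k <= N)%N ->
  \sum_(D : {ffun 'I_n -> 'I_N.+1} | [forall k, (D k <= e k)%N] && [forall k, (c k <= D k)%N])
     F (fun k => nat_of_ord (D k))
  = boxsum N (fun k => e k - c k)%N (fun d => F (fun k => c k + d k)%N).
Proof.
move=> lece; rewrite /boxsum.
pose shift (D : {ffun 'I_n -> 'I_N.+1}) : {ffun 'I_n -> 'I_N.+1} := [ffun k => inord (c k + D k)].
pose unshift (D : {ffun 'I_n -> 'I_N.+1}) : {ffun 'I_n -> 'I_N.+1} := [ffun k => inord (D k - c k)].
have leNS (m : nat) : (m <= N)%N -> (m < N.+1)%N by [].
have unshiftE D k : nat_of_ord (unshift D k) = (D k - c k)%N.
  by rewrite ffunE inordK // leNS // (leq_trans (leq_subr _ _)) // -ltnS.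
have shiftE (D : {ffun 'I_n -> 'I_N.+1}) k : (D k <= e k - c k)%N -> nat_of_ord (shift D k) = (c k + D k)%N.
  move=> le_De; have /andP[le_ce le_eN] := lece k.
  by rewrite ffunE inordK // leNS //; lia.
rewrite (reindex_onto shift unshift) /=; last first.
  move=> D /andP[/forallP leDe /forallP lecD]; apply/ffunP => k; apply/val_inj => /=.
  rewrite ffunE unshiftE subnKC ?lecD // inordK //.
have domE (D : {ffun 'I_n -> 'I_N.+1}) :
    ([forall k, (shift D k <= e k)%N] && [forall k, (c k <= shift D k)%N])
      && (unshift (shift D) == D) = [forall k, (D k <= e k - c k)%N].
  apply/idP/forallP => [/andP[/andP[/forallP leDe _] /eqP <-] k|leDe].
    by rewrite unshiftE leq_sub2r.
  apply/andP; split; first (apply/andP; split; apply/forallP => k).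
  - by rewrite shiftE // -leq_subRL ?leDe //; have /andP[] := lece k.
  - by rewrite shiftE ?leq_addr.
  by apply/eqP/ffunP => k; apply/val_inj; rewrite /= unshiftE shiftE // addKn.
apply: eq_big => // D; rewrite domE => /forallP leDe.
by congr F; apply: funext => k; rewrite shiftE.
Qed.

(* Both sides are the sum of f_c g_d h_(e-c-d) over c + d <= e. *)
Lemma mps_mulA : associative (@mps_mul R n).
Proof.
move=> f g h; apply: funext => e; rewrite !mps_mulE /boxsum.
set N := vmax e; have leeN k : (e k <= N)%N := leq_vmax e k.
transitivity (\sum_(C : {ffun 'I_n -> 'I_N.+1} | [forall k, (C k <= e k)%N])
   boxsum N (fun k => e k - C k)%N (fun d =>
     f (fun k => nat_of_ord (C k)) * (g d * h (fun k => e k - C k - d k)%N))).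
  apply: eq_bigr => C /forallP leCe; rewrite mps_mulE -(@boxsumE N); last first.
    by move=> k; rewrite (leq_trans (leq_subr _ _)).
  by rewrite /boxsum mulr_sumr.
transitivity (\sum_(D : {ffun 'I_n -> 'I_N.+1} | [forall k, (D k <= e k)%N])
   \sum_(C : {ffun 'I_n -> 'I_N.+1} | [forall k, (C k <= D k)%N])
     f (fun k => nat_of_ord (C k)) * g (fun k => D k - C k)%N *
        h (fun k => e k - D k)%N); last first.
  apply: eq_bigr => D /forallP leDe; rewrite mps_mulE -(@boxsumE N); last first.
    by move=> k; rewrite (leq_trans (leDe k)).
  by rewrite /boxsum mulr_suml.
rewrite [RHS](exchange_big_dep (fun C : {ffun 'I_n -> 'I_N.+1} => [forall k, (C k <= e k)%N])) /=;
  last first.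
  by move=> D C /forallP leDe /forallP leCD; apply/forallP => k; apply: leq_trans (leDe k).
apply: eq_bigr => C /forallP leCe.
rewrite (boxsum_shift (fun d => f (fun k => nat_of_ord (C k)) *
  g (fun k => d k - C k)%N * h (fun k => e k - d k)%N)) => [|k]; last by rewrite leCe leeN.
apply: eq_bigr => D _; rewrite mulrA; congr (_ * g _ * h _); apply: funext => k.
  by rewrite addKn.
by rewrite subnDA.
Qed.

Lemma mps_mulC : commutative (@mps_mul R n).
Proof.
move=> f g; apply: funext => e; rewrite !mps_mulE /boxsum.
set N := vmax e; have leeN k : (e k <= N)%N := leq_vmax e k.
pose flip (D : {ffun 'I_n -> 'I_N.+1}) : {ffun 'I_n -> 'I_N.+1} := [ffun k => inord (e k - D k)].
have flipE D k : nat_of_ord (flip D k) = (e k - D k)%N.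
  by rewrite ffunE inordK // ltnS (leq_trans (leq_subr _ _)).
have flipK (D : {ffun 'I_n -> 'I_N.+1}) : [forall k, (D k <= e k)%N] -> flip (flip D) = D.
  by move=> /forallP leDe; apply/ffunP => k; apply/val_inj; rewrite /= !flipE subKn.
rewrite (reindex_onto flip flip) //=.
apply: eq_big => [D|D /andP[_ /eqP flipKD]].
  apply/idP/idP => [/andP[_ /eqP <-]|leDe]; first by apply/forallP => k; rewrite !flipE leq_subr.
  by rewrite flipK // eqxx andbT; apply/forallP => k; rewrite flipE leq_subr.
rewrite mulrC; congr (g _ * f _); apply: funext => k; rewrite flipE //.
by rewrite -[in RHS]flipKD !flipE.
Qed.

Lemma mps_mul1l : left_id (@mps_one R n) (@mps_mul R n).
Proof.
move=> f; apply: funext => e; rewrite mps_mulE /boxsum.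
pose D0 : {ffun 'I_n -> 'I_(vmax e).+1} := [ffun k => ord0].
rewrite (bigD1 D0) /=; last by apply/forallP => k; rewrite ffunE.
rewrite big1 => [|D /andP[_ neD0]].
  rewrite /mps_one ifT ?mul1r ?addr0; last by apply/forallP => k; rewrite ffunE.
  by congr f; apply: funext => k; rewrite ffunE subn0.
rewrite /mps_one ifF ?mul0r //; apply: contraNF neD0 => /forallP D0E.
by apply/eqP/ffunP => k; apply/val_inj; rewrite ffunE /=; apply/eqP.
Qed.

Lemma mps_mulDl : left_distributive (@mps_mul R n) (@mps_add R n).
Proof.
move=> f g h; apply: funext => e.
by rewrite /mps_add !mps_mulE /boxsum -big_split; apply: eq_bigr => D _; rewrite mulrDl.
Qed.

Definition mps_zero : series := fun _ => 0.
Definition mps_opp f : series := fun e => - f e.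

Lemma mps_addA : associative (@mps_add R n).
Proof. by move=> f g h; apply: funext => e; rewrite /mps_add addrA. Qed.

Lemma mps_addC : commutative (@mps_add R n).
Proof. by move=> f g; apply: funext => e; rewrite /mps_add addrC. Qed.

Lemma mps_add0l : left_id mps_zero (@mps_add R n).
Proof. by move=> f; apply: funext => e; rewrite /mps_add add0r. Qed.

Lemma mps_addNl : left_inverse mps_zero mps_opp (@mps_add R n).
Proof. by move=> f; apply: funext => e; rewrite /mps_add addNr. Qed.

End SeriesRing.

HB.instance Definition _ (R : comNzRingType) (n : nat) :=
  GRing.isZmodule.Build (mps R n)
    (@mps_addA R n) (@mps_addC R n) (@mps_add0l R n) (@mps_addNl R n).
HB.instance Definition _ (R : comNzRingType) (n : nat) :=
  GRing.Zmodule_isComPzRing.Build (mps R n)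
    (@mps_mulA R n) (@mps_mulC R n) (@mps_mul1l R n) (@mps_mulDl R n).

Section SeriesCoefficients.
Variables (R : comNzRingType) (n : nat).
Implicit Types (f g : mps R n) (e d m : 'I_n -> nat) (c : R).

Lemma coef_mpsD f g e : (f + g) e = f e + g e.
Proof. by []. Qed.

Lemma coef_mps_sum (I : Type) (r : seq I) (P : pred I) (F : I -> mps R n) e :
  (\sum_(i <- r | P i) F i) e = \sum_(i <- r | P i) F i e.
Proof. by elim/big_rec2: _ => // i x h _ <-. Qed.

Lemma coef_mps_sign (b : bool) f e : ((-1) ^+ b * f) e = (-1) ^+ b * f e.
Proof. by case: b; rewrite ?expr0 ?expr1 ?mul1r ?mulN1r. Qed.

Lemma coef_mps_mul0 f g e :
  (forall d, (forall k, d k <= e k)%N -> f d * g (fun k => e k - d k)%N = 0) ->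
  (f * g) e = 0.
Proof. by move=> fg0; rewrite /GRing.mul /= mps_mulE /boxsum big1 // => D /forallP; apply: fg0. Qed.

Lemma coef_mps_mul_single f g e d0 : (forall k, d0 k <= e k)%N ->
  (forall d, (forall k, d k <= e k)%N -> (exists k, d k != d0 k) ->
      f d * g (fun k => e k - d k)%N = 0) ->
  (f * g) e = f d0 * g (fun k => e k - d0 k)%N.
Proof.
move=> led0e fg0; rewrite /GRing.mul /= mps_mulE /boxsum.
pose D0 : {ffun 'I_n -> 'I_(vmax e).+1} := [ffun k => inord (d0 k)].
have D0E k : nat_of_ord (D0 k) = d0 k.
  by rewrite ffunE inordK // ltnS (leq_trans (led0e k)) // leq_vmax.
rewrite (bigD1 D0) /=; last by apply/forallP => k; rewrite D0E.
rewrite big1 => [|D /andP[/forallP leDe neD0]].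
  by rewrite addr0; congr (f _ * g _); apply: funext => k; rewrite D0E.
apply: fg0 => //; apply/existsP; rewrite -negb_forall; apply: contra neD0 => /forallP DE.
by apply/eqP/ffunP => k; apply/val_inj; rewrite /= D0E; apply/eqP.
Qed.

Lemma coef_mmonoM c m f e :
  (mmono c m * f) e = if [forall k, (m k <= e k)%N] then c * f (fun k => e k - m k)%N else 0.
Proof.
have mmonoE d : mmono c m d = if [forall k, d k == m k] then c else 0 by [].
case: ifP => [/forallP lem|/negbT lem].
  rewrite (coef_mps_mul_single (d0 := m)) // ?mmonoE; first by rewrite ifT //; apply/forallP.
  move=> d _ [k nek]; rewrite mmonoE ifF ?mul0r //.
  by apply: contraNF nek => /forallP; apply.
apply: coef_mps_mul0 => d led; rewrite mmonoE; case: ifP => [/forallP dE|]; last by rewrite mul0r.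
by case/negP: lem; apply/forallP => k; rewrite -(eqP (dE k)).
Qed.

Lemma mmonoM c c' m m' : mmono c m * mmono c' m' = mmono (c * c') (fun k => m k + m' k)%N.
Proof.
apply: funext => e; rewrite coef_mmonoM /mmono.
have -> : [forall k, e k == (m k + m' k)%N] =
          [forall k, (m k <= e k)%N] && [forall k, (e k - m k)%N == m' k].
  apply/forallP/andP => [eE|[/forallP lem /forallP eE] k].
    by split; apply/forallP => k; rewrite (eqP (eE k)) ?leq_addr ?addKn.
  by rewrite -(eqP (eE k)) subnKC.
by case: ifP => // _; case: ifP; rewrite ?mulr0.
Qed.

Lemma mmonoN c m : mmono (- c) m = - mmono c m.
Proof. by apply: funext => e; rewrite /mmono /GRing.opp /= /mps_opp; case: ifP; rewrite ?oppr0. Qed.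

Lemma mmono0 m : mmono (0 : R) m = 0.
Proof. by apply: funext => e; rewrite /mmono; case: ifP. Qed.

Lemma mmono1 : mmono (1 : R) (fun _ : 'I_n => 0%N) = 1.
Proof. by []. Qed.

End SeriesCoefficients.

Lemma coefM_top (R : comNzRingType) (p q : {poly R}) i j :
  (size p <= i.+1)%N -> (size q <= j.+1)%N -> (p * q)`_(i + j) = p`_i * q`_j.
Proof.
move=> szp szq; have lti : (i < (i + j).+1)%N by rewrite ltnS leq_addr.
rewrite coefM (bigD1 (Ordinal lti)) //= addKn big1 ?addr0 // => k nek.
case: (ltngtP k i) => [ltki|ltik|eqki]; last by case/eqP: nek; apply/val_inj.
  by rewrite [q`__]nth_default ?mulr0 // (leq_trans szq) // ltn_subRL ltn_add2r.
by rewrite nth_default ?mul0r // (leq_trans szp).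
Qed.

Lemma coef_prod_top (R : comNzRingType) (I : Type) (r : seq I) (F : I -> {poly R}) (k : I -> nat) :
  (forall i, size (F i) <= (k i).+1)%N ->
  (size (\prod_(i <- r) F i)%R <= (\sum_(i <- r) k i).+1)%N /\
  (\prod_(i <- r) F i)`_(\sum_(i <- r) k i) = \prod_(i <- r) (F i)`_(k i).
Proof.
move=> szF; elim: r => [|i r [szP coefP]]; first by rewrite !big_nil size_poly1 coef1.
rewrite !big_cons coefM_top // coefP; split => //.
by apply: leq_trans (size_mul_leq _ _) _; move: (szF i) szP; lia.
Qed.

Lemma coefM_top_subn (R : comNzRingType) (p q : {poly R}) x y s s' :
  (size p <= x.+1 - s)%N -> (size q <= y.+1 - s')%N ->
  (size (p * q)%R <= (x + y).+1 - (s + s'))%N /\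
  (p * q)`_(x + y - (s + s')) = p`_(x - s) * q`_(y - s').
Proof.
have [ltxs|lesx] := ltnP x s.
  have -> : (x.+1 - s = 0)%N by apply/eqP; rewrite subn_eq0.
  by rewrite leqn0 size_poly_eq0 => /eqP -> _; rewrite mul0r size_poly0 !coef0 mul0r.
have [ltys|lesy] := ltnP y s'.
  have -> : (y.+1 - s' = 0)%N by apply/eqP; rewrite subn_eq0.
  by move=> _; rewrite leqn0 size_poly_eq0 => /eqP ->; rewrite mulr0 size_poly0 !coef0 mulr0.
rewrite !subSn ?leq_add // => szp szq.
have -> : (x + y - (s + s') = (x - s) + (y - s'))%N by lia.
split; last exact: coefM_top.
by apply: leq_trans (size_mul_leq _ _) _; lia.
Qed.

Section TopPart.
Variables (R : comNzRingType) (n : nat).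
Implicit Types (e d : 'I_n -> nat) (f g : mps {poly R} n).

Definition weight e := (\sum_(k < n) e k)%N.

(* The coefficient of [u^e] has degree at most [|e| - s] in the outer variable,
   and vanishes when [|e| < s]. *)
Definition graded s f := forall e, (size (f e) <= (weight e).+1 - s)%N.

Definition top_part s f : mps R n := fun e => (f e)`_(weight e - s).

Lemma weight_split e d : (forall k, d k <= e k)%N ->
  weight e = (weight d + weight (fun k => e k - d k))%N.
Proof. by move=> le_de; rewrite /weight -big_split; apply: eq_bigr => k _; rewrite /= subnKC. Qed.

Lemma weightD e d : weight (fun k => e k + d k)%N = (weight e + weight d)%N.
Proof. by rewrite /weight big_split. Qed.

Lemma weight0 : weight (fun _ => 0%N) = 0%N.
Proof. by rewrite /weight big1. Qed.

Definition on_axis i e := [forall k, (k != i) ==> (e k == 0%N)].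

Lemma weight_axis e i : on_axis i e -> weight e = e i.
Proof.
move=> /forallP e0; rewrite /weight (bigD1 i) //= big1 ?addn0 // => k nek.
by apply/eqP; move: (e0 k); rewrite nek.
Qed.

Lemma weight_uvec i : weight (uvec i) = 1%N.
Proof. by rewrite (weight_axis (i := i)) /uvec ?eqxx //; apply/forallP => k; case: eqP. Qed.

Lemma graded_mul s s' f g : graded s f -> graded s' g ->
  graded (s + s') (f * g) /\ top_part (s + s') (f * g) = top_part s f * top_part s' g.
Proof.
move=> gr_f gr_g; have top D e := coefM_top_subn (gr_f D) (gr_g (fun k => e k - D k)%N).
split => [e|].
  rewrite /GRing.mul /= mps_mulE /boxsum; apply: leq_trans (size_sum _ _ _) _.
  apply/bigmax_leqP => D /forallP leDe.
  by rewrite (@weight_split e (fun k => D k)) //; case: (top (fun k => nat_of_ord (D k)) e).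
apply: funext => e; rewrite /top_part /GRing.mul /= !mps_mulE /boxsum coef_sum.
apply: eq_bigr => D /forallP leDe.
by rewrite (@weight_split e (fun k => D k)) //; case: (top (fun k => nat_of_ord (D k)) e).
Qed.

Lemma graded_prod (I : Type) (r : seq I) (P : pred I) (F : I -> mps {poly R} n) (s : I -> nat) :
  (forall i, graded (s i) (F i)) ->
  graded (\sum_(i <- r | P i) s i) (\prod_(i <- r | P i) F i) /\
  top_part (\sum_(i <- r | P i) s i) (\prod_(i <- r | P i) F i)
   = \prod_(i <- r | P i) top_part (s i) (F i).
Proof.
move=> gr_F; elim/big_rec3: _ => [|i s' F' T _ [gr_F' <-]]; last exact: graded_mul.
split => [e|]; rewrite /GRing.one /= /mps_one ?subn0.
  by case: ifP; rewrite ?size_poly1 ?size_poly0.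
apply: funext => e; rewrite /top_part subn0 /mps_one.
case: ifP => [/forallP e0|]; last by rewrite coef0.
by rewrite /weight big1 ?coef1 // => k _; apply/eqP.
Qed.

Lemma graded_mmono s (c : {poly R}) m : (size c <= (weight m).+1 - s)%N -> graded s (mmono c m).
Proof.
move=> szc e; rewrite /mmono; case: ifP => [/forallP eE|_]; last by rewrite size_poly0.
by have -> : e = m by apply: funext => k; apply/eqP.
Qed.

Lemma top_part_mmono s (c : {poly R}) m : top_part s (mmono c m) = mmono c`_(weight m - s) m.
Proof.
apply: funext => e; rewrite /top_part /mmono; case: ifP => [/forallP eE|_]; last by rewrite coef0.
by have -> : e = m by apply: funext => k; apply/eqP.
Qed.

Lemma graded_add s f g : graded s f -> graded s g -> graded s (mps_add f g).
Proof. by move=> gr_f gr_g e; apply: leq_trans (size_add _ _) _; rewrite geq_max gr_f gr_g. Qed.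

Lemma top_partD s f g : top_part s (mps_add f g) = mps_add (top_part s f) (top_part s g).
Proof. by apply: funext => e; rewrite /top_part /mps_add coefD. Qed.

End TopPart.

Lemma size_index_enum_ord k : size (index_enum 'I_k) = k.
Proof. by rewrite /index_enum unlock -enumT size_enum_ord. Qed.

Lemma binomP0 (x : {poly rat}) : binomP x 0 = 1.
Proof. by rewrite /binomP /= invr1 scale1r big_ord0. Qed.

Lemma binomPS (x : {poly rat}) k : binomP (x + 1) k.+1 = binomP x k.+1 + binomP x k.
Proof.
set F := \prod_(m < k) (x - (m%:R)%:P).
have prodS1 : \prod_(m < k.+1) (x + 1 - (m%:R)%:P) = (x + 1) * F.
  rewrite big_ord_recl /= subr0; congr (_ * _); apply: eq_bigr => m _.
  by rewrite /bump /= add1n mulrSr polyCD polyC1 opprD addrACA subrr addr0.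
apply/eqP; rewrite -subr_eq0 /binomP prodS1 big_ord_recr /= -/F.
rewrite [F * _]mulrC opprD addrA -scalerBr -mulrBl addrAC opprB.
rewrite (_ : x + ((k%:R)%:P - x) + 1 = (k.+1)%:R%:P); last by rewrite subrKC -natr1 polyCD polyC1.
rewrite mul_polyC scalerA factS natrM invfM mulrAC mulVf ?mul1r ?subrr //.
by rewrite pnatr_eq0.
Qed.

Lemma binomP_lt0 (x : {poly rat}) (m k : nat) : (m < k)%N -> binomP x (m%:Z - k%:Z) = 0.
Proof.
move=> ltmk; have -> : m%:Z - k%:Z = Negz (k - m).-1.
  by rewrite NegzE prednK ?subn_gt0 // -subzn ?opprB // ltnW.
by [].
Qed.

Lemma binomP_top (c : rat) (k : nat) :
  (size (binomP ('X + c%:P) k) <= k.+1)%N /\ (binomP ('X + c%:P) k)`_k = (k`!%:R)^-1.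
Proof.
rewrite /binomP; have -> : \prod_(m < k) ('X + c%:P - (m%:R)%:P) = \prod_(m < k) ('X - (m%:R - c)%:P).
  by apply: eq_bigr => m _; rewrite polyCB opprB addrA.
have sz : size (\prod_(m < k) ('X - (m%:R - c)%:P)) = k.+1.
  by rewrite size_prod_XsubC size_index_enum_ord.
split; first by apply: leq_trans (size_scale_leq _ _) _; rewrite sz.
have /monicP := monic_prod_XsubC (index_enum 'I_k) predT (fun m : 'I_k => m%:R - c).
by rewrite coefZ lead_coefE sz => ->; rewrite mulr1.
Qed.

Section BinomialSeries.
Variable n : nat.
Implicit Types (x : {poly rat}) (i j : 'I_n) (e : 'I_n -> nat).

Definition binom_series x i : mps {poly rat} n :=
  fun e => if on_axis i e then binomP x (e i) else 0.

Definition uvar i : mps {poly rat} n := mmono 1 (uvec i).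

Lemma graded_pow_factor i : graded 0 (pow_factor i).
Proof.
move=> e; rewrite /pow_factor subn0; case: ifP => [axis|_]; last by rewrite size_poly0.
rewrite (weight_axis axis) /tau; apply: leq_trans (size_mul_leq _ _) _.
by rewrite size_polyXn addnS -pred_Sn -add1n leq_add2r size_polyC_leq1.
Qed.

Lemma top_part_pow_factor i : top_part 0 (pow_factor i) = binom_series 'X i.
Proof.
apply: funext => e; rewrite /top_part /pow_factor /binom_series /on_axis subn0.
case: ifP => [axis|_]; last by rewrite coef0.
by rewrite (weight_axis axis) /tau coefCM coefXn eqxx mulr1.
Qed.

Lemma graded_pair_factor i j : graded 1 (pair_factor i j) /\
  top_part 1 (pair_factor i j) = (uvar j - uvar i) * (1 + uvar j).
Proof.
have gr_diff : graded 1 (mps_add (mmono (1 : {poly {poly rat}}) (uvec j)) (mmono (-1) (uvec i))).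
  by apply: graded_add; apply: graded_mmono; rewrite weight_uvec ?size_opp size_poly1.
have gr_quad : graded 0 (mps_add (mmono (1 : {poly {poly rat}}) (fun _ => 0%N))
    (mps_add (mmono tau (uvec j)) (mmono 1 (fun k => (uvec i k + uvec j k)%N)))).
  apply: graded_add; first by apply: graded_mmono; rewrite size_poly1.
  by apply: graded_add; apply: graded_mmono; rewrite ?weight_uvec ?size_polyX ?size_poly1.
have [gr_pair ->] := graded_mul gr_diff gr_quad; split => //.
rewrite !top_partD !top_part_mmono !weightD !weight_uvec weight0.
rewrite coefN !coef1 /tau coefX /= mmonoN mmono0 mmono1.
by rewrite (_ : mps_add (mmono 1 (uvec j)) 0 = uvar j) //; apply: addr0.
Qed.

Lemma binom_seriesS x i : binom_series x i * (1 + uvar i) = binom_series (x + 1) i.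
Proof.
apply: funext => e; rewrite mulrDr mulr1 [_ * uvar i]mulrC coef_mpsD coef_mmonoM mul1r.
rewrite /binom_series.
have [axis|offaxis] := boolP (on_axis i e).
  have -> : [forall k, (uvec i k <= e k)%N] = (0 < e i)%N.
    apply/forallP/idP => [/(_ i)|e_gt0 k]; first by rewrite /uvec eqxx.
    by rewrite /uvec; case: eqP => [->|].
  case eik: (e i) => [|k]; first by rewrite addr0 !binomP0.
  have -> : on_axis i (fun k => e k - uvec i k)%N.
    apply/forallP => l; apply/implyP => neli; move/forallP/(_ l): axis.
    by rewrite neli => /eqP ->.
  by rewrite ltn0Sn /uvec eqxx subn1 binomPS.
rewrite add0r; case: ifP => // _; rewrite ifF //; apply: contraNF offaxis => /forallP axis.
apply/forallP => l; apply/implyP => neli; move/implyP/(_ neli): (axis l).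
by rewrite /uvec (negbTE neli) subn0.
Qed.

Lemma binom_series_shift x i m :
  binom_series x i * (1 + uvar i) ^+ m = binom_series (x + m%:R%:P) i.
Proof.
elim: m => [|m IHm]; first by rewrite expr0 mulr1 addr0.
by rewrite exprSr mulrA IHm binom_seriesS -addrA -polyC1 -polyCD natr1.
Qed.

Lemma coef_prod_binom_series_seq (x : 'I_n -> {poly rat}) (r : seq 'I_n) e : uniq r ->
  (\prod_(i <- r) binom_series (x i) i) e =
  if [forall k, (k \notin r) ==> (e k == 0%N)] then \prod_(i <- r) binomP (x i) (e i) else 0.
Proof.
elim: r e => [|i r IHr] e; first by rewrite !big_nil.
rewrite cons_uniq big_cons => /andP[i_r uniq_r].
have [supp|offsupp] := boolP [forall k, (k \notin i :: r) ==> (e k == 0%N)].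
  pose ei k := if k == i then e k else 0%N.
  have le_ei k : (ei k <= e k)%N by rewrite /ei; case: eqP.
  rewrite (coef_mps_mul_single (d0 := ei)) //; last first.
    move=> d led [k nedk]; rewrite /binom_series.
    case: ifP => [/forallP daxis|_]; last by rewrite mul0r.
    rewrite IHr //; case: ifP => [/forallP rest|_]; last by rewrite mulr0.
    exfalso; move: nedk; rewrite /ei; case: (k =P i) => [->|/eqP neki].
      by move: (rest i); rewrite (negbTE i_r) /= subn_eq0 eqn_leq led => ->.
    by move: (daxis k); rewrite neki /= => /eqP ->.
  rewrite big_cons /binom_series ifT; last by apply/forallP => k; rewrite /ei; case: eqP.
  rewrite IHr // /ei eqxx ifT; last first.
    apply/forallP => k; apply/implyP => k_r; case: (k =P i) => [_|/eqP neki]; first by rewrite subnn.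
    by move/forallP/(_ k): supp; rewrite in_cons negb_or neki k_r subn0.
  congr (_ * _); rewrite big_seq_cond [RHS]big_seq_cond; apply: eq_bigr => j /andP[j_r _].
  by case: (j =P i) => [eji|]; [move: i_r; rewrite -eji j_r | rewrite subn0].
apply: coef_mps_mul0 => d led; rewrite /binom_series.
case: ifP => [/forallP daxis|_]; last by rewrite mul0r.
rewrite IHr //; case: ifP => [/forallP rest|_]; last by rewrite mulr0.
move: offsupp; rewrite negb_forall => /existsP[k]; rewrite negb_imply in_cons negb_or.
case/andP=> /andP[neki k_r] ek0; move: (rest k); rewrite k_r /=.
by move/implyP/(_ neki)/eqP: (daxis k) => ->; rewrite subn0 (negbTE ek0).
Qed.

Lemma coef_prod_binom_series (x : 'I_n -> {poly rat}) e :
  (\prod_(i < n) binom_series (x i) i) e = \prod_(i < n) binomP (x i) (e i).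
Proof.
rewrite coef_prod_binom_series_seq ?index_enum_uniq // ifT //.
by apply/forallP => k; rewrite mem_index_enum.
Qed.

Lemma uvar_expn i m : uvar i ^+ m = mmono 1 (fun k => m * uvec i k)%N.
Proof.
elim: m => [|m IHm]; first by rewrite expr0 -mmono1; congr mmono; apply: funext => k.
by rewrite exprS IHm mmonoM mulr1; congr mmono; apply: funext => k; rewrite mulSn.
Qed.

Lemma prod_uvar_expn (m : 'I_n -> nat) : \prod_(i < n) uvar i ^+ m i = mmono 1 m.
Proof.
have prod_seq (r : seq 'I_n) : \prod_(i <- r) uvar i ^+ m i =
    mmono 1 (fun k => \sum_(i <- r) m i * uvec i k)%N.
  elim: r => [|i r IHr]; first by rewrite !big_nil -mmono1; congr mmono; apply: funext => k; rewrite big_nil.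
  by rewrite !big_cons IHr uvar_expn mmonoM mulr1; congr mmono; apply: funext => k; rewrite big_cons.
rewrite prod_seq; congr mmono; apply: funext => k.
rewrite (bigD1 k) //= big1 ?addn0 => [|i neik]; first by rewrite /uvec eqxx muln1.
by rewrite /uvec eq_sym (negbTE neik) muln0.
Qed.

End BinomialSeries.

Lemma card_ord_ltn n j : (j <= n)%N -> #|[pred i : 'I_n | (i < j)%N]| = j.
Proof.
move=> le_jn; rewrite -sum1_card.
by rewrite (big_ord_narrow_cond (P := predT) (F := fun _ => 1%N) le_jn) sum1_card card_ord.
Qed.

Definition ffpoly j : {poly rat} := \prod_(m < j) ('X - (m%:R)%:P).

Lemma size_ffpoly j : size (ffpoly j) = j.+1.
Proof. by rewrite size_prod_XsubC size_index_enum_ord. Qed.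

Lemma ffpoly_monic j : ffpoly j \is monic.
Proof. exact: monic_prod_XsubC. Qed.

Lemma horner_ffpoly (x j : nat) : (ffpoly j).[x%:R] = (x ^_ j)%:R.
Proof.
rewrite /ffpoly horner_prod ffact_prod natr_prod; have [le_jx|lt_xj] := leqP j x.
  by apply: eq_bigr => m _; rewrite hornerXsubC natrB // (leq_trans (ltnW (ltn_ord m)) le_jx).
rewrite (bigD1 (Ordinal lt_xj)) //= hornerXsubC subrr mul0r.
by rewrite (bigD1 (Ordinal lt_xj)) //= subnn mul0r.
Qed.

Section TopSeries.
Variable n : nat.

Definition binom_mx (b : 'I_n -> nat) : 'M[{poly rat}]_n :=
  \matrix_(i, j) binomP ('X + (i%:R)%:P) ((b i)%:Z - (j : nat)%:Z).

Definition top_series : mps {poly rat} n :=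
  (\prod_(i < n) binom_series 'X i) *
  \prod_(i < n) \prod_(j < n | (i < j)%N) ((uvar j - uvar i) * (1 + uvar j)).

(* Vandermonde: the product of the [u_j - u_i] is [det (u_j^i)], and each
   [(1 + u_j)^j] is absorbed into the binomial series of row [j]. *)
Lemma coef_top_series b : top_series b = \det (binom_mx b).
Proof.
rewrite /top_series; under [X in _ * X]eq_bigr do rewrite big_split; rewrite big_split /=.
have -> : \prod_(i < n) \prod_(j < n | (i < j)%N) (1 + uvar j) = \prod_(j < n) (1 + uvar j) ^+ j.
  rewrite (exchange_big_dep predT) //=; apply: eq_bigr => j _.
  by rewrite prodr_const card_ord_ltn // ltnW.
have -> : \prod_(i < n) \prod_(j < n | (i < j)%N) (uvar j - uvar i) =
          \det (Vandermonde n (\row_j uvar j)).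
  by rewrite det_Vandermonde; apply: eq_bigr => i _; apply: eq_bigr => j _; rewrite !mxE.
rewrite mulrCA -big_split /=; under eq_bigr do rewrite binom_series_shift.
rewrite -det_tr /determinant mulr_suml coef_mps_sum; apply: eq_bigr => s _.
rewrite -mulrA coef_mps_sign; congr (_ * _).
under eq_bigr do rewrite !mxE; rewrite prod_uvar_expn coef_mmonoM mul1r.
case: ifP => [/forallP le_sb|/negP le_sb].
  by rewrite coef_prod_binom_series; apply: eq_bigr => i _; rewrite mxE subzn.
case: (pickP (fun i => b i < s i)%N) => [i lt_bs|ge_bs]; last first.
  by case: le_sb; apply/forallP => k; rewrite leqNgt ge_bs.
by rewrite (bigD1 i) //= mxE binomP_lt0 // mul0r.
Qed.

Definition inv_fact_mx (b : 'I_n -> nat) : 'M[rat]_n :=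
  \matrix_(i, j) if (j <= b i)%N then ((b i - j)`!%:R)^-1 else 0.

Lemma sum_subn_perm (b : 'I_n -> nat) (s : 'S_n) :
  (forall i, s i <= b i)%N -> (forall i : 'I_n, i <= b i)%N ->
  (\sum_(i < n) (b i - s i))%N = (\sum_(i < n) (b i - i))%N.
Proof.
move=> le_sb le_ib; apply/eqP; rewrite -(eqn_add2r (\sum_(i < n) (i : nat))).
rewrite [X in (_ + X == _)%N](reindex_inj (@perm_inj _ s)) -!big_split /=.
by apply/eqP; apply: eq_bigr => i _; rewrite !subnK.
Qed.

(* Only the permutations with [s i <= b i] reach degree [\sum_i (b i - i)], with
   leading coefficient [\prod_i 1 / (b i - s i)!]. *)
Lemma coef_det_binom_mx (b : 'I_n -> nat) : (forall i : 'I_n, i <= b i)%N ->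
  (\det (binom_mx b))`_(\sum_(i < n) (b i - i)) = \det (inv_fact_mx b).
Proof.
move=> le_ib; rewrite /determinant coef_sum; apply: eq_bigr => s _.
rewrite -(rmorph_sign polyC) coefCM; congr (_ * _).
case: (boolP [forall i, (s i <= b i)%N]) => [/forallP le_sb|].
  rewrite -(sum_subn_perm le_sb le_ib).
  under eq_bigr do rewrite mxE subzn ?le_sb //.
  have [_ ->] := coef_prod_top (index_enum 'I_n)
     (fun i => proj1 (binomP_top (i%:R) (b i - s i))).
  by apply: eq_bigr => i _; rewrite mxE le_sb (proj2 (binomP_top _ _)).
rewrite negb_forall => /existsP[i]; rewrite -ltnNge => lt_bs.
rewrite (bigD1 i) //= mxE binomP_lt0 // mul0r coef0.
by rewrite (bigD1 i) //= mxE leqNgt lt_bs mul0r.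
Qed.

(* [inv_fact_mx b] is [diag (1 / (b i)!)] times the matrix [((b i)^_j)], which is
   the Vandermonde matrix of the [b i] times the unitriangular matrix of the
   coefficients of the falling factorials. *)
Lemma det_inv_fact_mx_neq0 (b : 'I_n -> nat) : injective b -> \det (inv_fact_mx b) != 0.
Proof.
move=> inj_b.
pose w : 'rV[rat]_n := \row_i ((b i)`!%:R)^-1.
pose V : 'M[rat]_n := (Vandermonde n (\row_i ((b i)%:R : rat)))^T.
pose C : 'M[rat]_n := \matrix_(k, j) (ffpoly j)`_k.
have -> : inv_fact_mx b = diag_mx w *m (V *m C).
  apply/matrixP => i j; rewrite mul_diag_mx !mxE.
  have -> : \sum_k V i k * C k j = ((b i) ^_ j)%:R.
    rewrite -horner_ffpoly (@horner_coef_wide _ n) ?size_ffpoly //.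
    by apply: eq_bigr => k _; rewrite !mxE mulrC.
  case: leqP => [le_jb|lt_bj]; last by rewrite ffact_small // mulr0.
  rewrite -(ffact_fact le_jb) natrM invfM mulrAC mulVf ?mul1r //.
  by rewrite pnatr_eq0 -lt0n ffact_gt0.
rewrite !det_mulmx det_diag /V det_tr det_Vandermonde.
have -> : \det C = 1.
  rewrite -det_tr det_trig; last first.
    apply/forallP => i; apply/forallP => j; apply/implyP => lt_ij.
    by rewrite !mxE nth_default // size_ffpoly.
  rewrite big1 // => i _; have /monicP := ffpoly_monic i.
  by rewrite lead_coefE size_ffpoly !mxE.
rewrite mulr1 mulf_neq0 //.
  by apply/prodf_neq0 => i _; rewrite mxE invr_eq0 pnatr_eq0 -lt0n fact_gt0.
apply/prodf_neq0 => i _; apply/prodf_neq0 => j lt_ij; rewrite !mxE subr_eq0 eqr_nat.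
by apply: contraTneq lt_ij => /inj_b ->; rewrite ltnn.
Qed.

End TopSeries.

Definition Phi_series n : mps {poly {poly rat}} n :=
  (\prod_(i < n) pow_factor i) * \prod_(i < n) \prod_(j < n | (i < j)%N) pair_factor i j.

Lemma graded_Phi_series n :
  graded (\sum_(i < n) i) (@Phi_series n) /\
  top_part (\sum_(i < n) i) (@Phi_series n) = @top_series n.
Proof.
have [gr_pow top_pow] :=
  graded_prod (index_enum 'I_n) predT (s := fun _ => 0%N) (@graded_pow_factor n).
have gr_pairs (i : 'I_n) := graded_prod (index_enum 'I_n) (fun j : 'I_n => i < j)%N
  (s := fun _ => 1%N) (fun j => proj1 (graded_pair_factor i j)).
have [gr_pairs_all top_pairs_all] := graded_prod (index_enum 'I_n) predT
  (s := fun i : 'I_n => \sum_(j < n | (i < j)%N) 1)%N (fun i => proj1 (gr_pairs i)).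
have [gr_Phi top_Phi] := graded_mul gr_pow gr_pairs_all.
have -> : (\sum_(i < n) i = \sum_(i < n) 0 + \sum_(i < n) \sum_(j < n | (i < j)%N) 1)%N.
  rewrite [X in (_ = X + _)%N]big1 // add0n (exchange_big_dep predT) //=.
  by apply: eq_bigr => j _; rewrite sum1_card card_ord_ltn // ltnW.
split => //.
rewrite top_Phi top_pow top_pairs_all; congr (_ * _); apply: eq_bigr => i _.
  exact: top_part_pow_factor.
by rewrite (proj2 (gr_pairs i)); apply: eq_bigr => j _; rewrite (proj2 (graded_pair_factor i j)).
Qed.

Lemma matching_seq_spec n M : is_matching n M ->
  let a := matching_seq M in
  (forall i j, (i < j < n)%N -> (nth 0 a i < nth 0 a j)%N) /\
  (forall i, (i < n)%N -> (i < nth 0 a i)%N).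
Proof.
case/and4P => /eqP sizeM _ perm_ends _ a.
have firsts_sub (s : seq (nat * nat)) : uniq (flatten [seq [:: p.1; p.2] | p <- s]) ->
    uniq [seq p.1 | p <- s] /\ {subset [seq p.1 | p <- s] <= flatten [seq [:: p.1; p.2] | p <- s]}.
  elim: s => [|p s IHs] //= /andP[p_fresh /andP[_ uniq_s]]; have [uniq1 sub1] := IHs uniq_s.
  split; first by rewrite uniq1 andbT; apply: contra p_fresh => /sub1 p1_in; rewrite inE p1_in orbT.
  by move=> x; rewrite !inE => /orP[->|/sub1 ->] //; rewrite !orbT.
have [uniq_a sub_a] := firsts_sub M (etrans (perm_uniq perm_ends) (iota_uniq 1 (2 * n))).
have size_a : size a = n by rewrite size_sort size_map.
have sorted_a : sorted ltn a.
  by rewrite ltn_sorted_uniq_leq sort_uniq uniq_a sort_sorted //; apply: leq_total.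
have incr i j : (i < j < n)%N -> (nth 0 a i < nth 0 a j)%N.
  case/andP => lt_ij lt_jn; apply: (sorted_ltn_nth ltn_trans 0 sorted_a) => //.
  - by rewrite inE size_a (ltn_trans lt_ij).
  - by rewrite inE size_a.
split=> // i; elim: i => [|i IHi] lt_in.
  have : nth 0 a 0 \in a by rewrite mem_nth // size_a.
  by rewrite mem_sort => /sub_a; rewrite (perm_mem perm_ends) mem_iota => /andP[].
by apply: leq_ltn_trans (IHi (ltnW lt_in)) (incr _ _ _); rewrite leqnn lt_in.
Qed.

Definition exps n (a : seq nat) (i : 'I_n) : nat := (nth 0%N a i).-1.
Arguments exps : clear implicits.

Lemma matching_exps n M (a := matching_seq M) : is_matching n M ->
  [/\ forall i : 'I_n, (0 < nth 0%N a i)%N, forall i : 'I_n, (i <= exps n a i)%N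
    & injective (exps n a)].
Proof.
move=> /matching_seq_spec; rewrite -/a => -[incr_a gt_a].
have lt_exps (i j : 'I_n) : (i < j)%N -> (exps n a i < exps n a j)%N.
  move=> lt_ij; have := incr_a i j; rewrite lt_ij ltn_ord /exps -!subn1 => /(_ erefl).
  by have := gt_a i (ltn_ord i); lia.
split=> [i|i|i j eq_ij].
- exact: leq_ltn_trans (leq0n i) (gt_a i (ltn_ord i)).
- by have := gt_a i (ltn_ord i); rewrite /exps -subn1; lia.
apply/val_inj; case: (ltngtP i j) => // /lt_exps; by rewrite eq_ij ltnn.
Qed.

Lemma dsum_exps n a : (forall i : 'I_n, i <= exps n a i)%N ->
  dsum n a = (weight (exps n a) - \sum_(i < n) i)%N.
Proof.
move=> le_exps; have -> : weight (exps n a) = (\sum_(i < n) (exps n a i - i) + \sum_(i < n) i)%N.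
  by rewrite -big_split; apply: eq_bigr => i _; rewrite /= subnK.
by rewrite addnK; apply: eq_bigr => i _; rewrite /exps -subn1 -subnDA add1n.
Qed.

Lemma Dpoly_det n a : (forall i : 'I_n, 0 < nth 0%N a i)%N ->
  Dpoly n a = \det (binom_mx (exps n a)).
Proof.
move=> a_gt0; congr (\det _); apply/matrixP => i j; rewrite !mxE /exps; congr binomP.
by rewrite -[in LHS](prednK (a_gt0 i)) -addn1 PoszD addrAC addrK.
Qed.

Lemma Dpoly_neq0 n a : (forall i : 'I_n, 0 < nth 0%N a i)%N ->
  (forall i : 'I_n, i <= exps n a i)%N -> injective (exps n a) -> Dpoly n a != 0.
Proof.
move=> a_gt0 le_exps inj_exps; apply: contraNneq (det_inv_fact_mx_neq0 inj_exps) => D0.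
by rewrite -coef_det_binom_mx // -Dpoly_det // D0 coef0.
Qed.

Theorem mainTheorem10 (n : nat) (M : seq (nat * nat)) :
  is_matching n M ->
  size (Phi n (matching_seq M)) = (dsum n (matching_seq M)).+1 /\
  (Phi n (matching_seq M))`_(dsum n (matching_seq M)) = Dpoly n (matching_seq M).
Proof.
move=> /matching_exps; set a := matching_seq M => -[a_gt0 le_exps inj_exps].
have [gr_Phi top_Phi] := graded_Phi_series n.
have coefE : (Phi n a)`_(dsum n a) = Dpoly n a.
  by rewrite Dpoly_det // -coef_top_series -top_Phi dsum_exps.
have size_le : (size (Phi n a) <= (dsum n a).+1)%N.
  by rewrite dsum_exps // -subSn ?(gr_Phi (exps n a)) //; apply: leq_sum => i _.
split=> //; apply/eqP; rewrite eqn_leq size_le ltnNge.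
apply: contra (Dpoly_neq0 a_gt0 le_exps inj_exps) => /leq_sizeP/(_ _ (leqnn _)).
by rewrite coefE => ->.
Qed.
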